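(* Let $k\ge 2$ be an integer, $1/2<q<1$. Let $y^*$ be a point with all coordinates strictly positive at which $P$ attains its maximum over $\Delta_k$, and suppose $y^*\neq(1/k,\dots,1/k)$. Then the coordinates of $y^*$ take exactly two distinct values $a$ and $b$, with $a<1-q<b$.
   Context: $\Delta_k=\{y\in\mathbb R^k: y_i\ge 0,\ \sum_i y_i=1\}$. For $y\in\Delta_k$, $P(y)=\sum_{i=1}^k y_i^q\prod_{j\ne i}(1-y_j)^q$. *)

From mathcomp Require Import all_boot all_order all_algebra.
From mathcomp Require Import all_classical all_reals all_analysis.
Set Implicit Arguments. Unset Strict Implicit. Unset Printing Implicit Defensive.
Import Order.TTheory GRing.Theory Num.Theory.
Local Open Scope ring_scope.

Definition in_simplex (R : realType) (k : nat) (y : 'I_k -> R) : Prop :=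
  (forall i, 0 <= y i) /\ \sum_(i < k) y i = 1.

Definition Pq_fun (R : realType) (k : nat) (q : R) (y : 'I_k -> R) : R :=
  \sum_(i < k) (y i `^ q * \prod_(j < k | j != i) (1 - y j) `^ q).

From mathcomp Require Import all_boot all_order all_algebra.
From mathcomp Require Import all_classical all_reals all_analysis.
From mathcomp Require Import ring lra.
Import Order.TTheory GRing.Theory Num.Theory.
Set Implicit Arguments. Unset Strict Implicit. Unset Printing Implicit Defensive.
Local Open Scope ring_scope.

(* Write P(y) = prod_l (1 - y_l)^q * sum_l h(y_l) with h(w) = w^q / (1 - w)^q.
   At an interior maximiser, moving mass from one coordinate to another shows
   that all partial derivatives of P agree, i.e. that
   h(y_l)/y_l - (S - h(y_l))/(1 - y_l) does not depend on l, where S = sum_l h(y_l).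
   Weighting these quantities by y_l (1 - y_l) and summing gives 0, hence
   h(y_l)/y_l = S for every l.  Since ln(h(w)/w) = (q-1) ln w - q ln(1-w)
   strictly decreases on (0, 1-q] and strictly increases on [1-q, 1), two
   distinct coordinates must lie on opposite sides of 1 - q, and a non-uniform
   maximiser takes exactly two values. *)

Lemma bigD2 (T : Type) (idx : T) (op : Monoid.com_law idx) (I : finType)
    (i j : I) (F : I -> T) : i != j ->
  \big[op/idx]_l F l = op (op (F i) (F j)) (\big[op/idx]_(l | (l != i) && (l != j)) F l).
Proof.
move=> ij; rewrite (bigD1 i) // (bigD1 j) 1?eq_sym //= Monoid.mulmA.
by congr (op _ _); apply: eq_bigl => l; rewrite andbC.
Qed.

Section Transfer.
Variables (R : realType) (k : nat) (y : 'I_k -> R) (i j : 'I_k).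
Hypothesis neq_ij : i != j.

Definition transfer (t : R) : 'I_k -> R :=
  fun l => if l == i then y i + t else if l == j then y j - t else y l.

Lemma transfer0 : transfer 0 = y.
Proof.
apply/funext => l; rewrite /transfer addr0 subr0.
by case: ifP => [/eqP ->|_] //; case: ifP => [/eqP ->|].
Qed.

Lemma big_transfer (T : Type) (idx : T) (op : Monoid.com_law idx) (F : R -> T) t :
  \big[op/idx]_l F (transfer t l) =
  op (op (F (y i + t)) (F (y j - t))) (\big[op/idx]_(l | (l != i) && (l != j)) F (y l)).
Proof.
rewrite (bigD2 _ _ neq_ij) /transfer eqxx eq_sym (negbTE neq_ij) eqxx.
by congr (op _ _); apply: eq_bigr => l /andP [/negbTE -> /negbTE ->].
Qed.

Lemma sum_transfer t : \sum_l transfer t l = \sum_l y l.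
Proof.
rewrite (big_transfer _ (fun w => w)) (bigD2 _ _ neq_ij) /=.
by congr (_ + _); ring.
Qed.

End Transfer.

Section Simplex.
Variables (R : realType) (k : nat).
Implicit Types (y : 'I_k -> R).

Lemma simplex_pair_le1 y (i j : 'I_k) : i != j -> in_simplex y -> y i + y j <= 1.
Proof.
move=> ij [y_ge0 <-]; rewrite (bigD2 _ _ ij) lerDl.
by apply: sumr_ge0 => l _.
Qed.

Lemma simplex_lt1 y (i j : 'I_k) : i != j -> in_simplex y -> (forall l, 0 < y l) ->
  forall l, y l < 1.
Proof.
move=> ij y_simplex y_pos l.
have [m lm] : exists m, l != m by case: (eqVneq l i) => [->|]; [exists j | exists i].
by have := simplex_pair_le1 lm y_simplex; have := y_pos m; lra.
Qed.

Lemma simplex_transfer y (i j : 'I_k) t : i != j -> in_simplex y ->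
  - y i <= t <= y j -> in_simplex (transfer y i j t).
Proof.
move=> ij [y_ge0 y_sum] /andP [ti tj]; split; last by rewrite sum_transfer.
move=> l; rewrite /transfer; case: ifP => _; first by have := y_ge0 i; lra.
by case: ifP => _ //; rewrite subr_ge0.
Qed.

Lemma exists_lt_of_nonuniform y : \sum_(l < k) y l = 1 ->
  ~ (forall l, y l = 1 / k%:R) -> exists l1 l2, y l1 < y l2.
Proof.
move=> y_sum nonunif; case: k y y_sum nonunif => [|n] y y_sum nonunif.
  by move: y_sum; rewrite big_ord0 => /eqP; rewrite eq_sym oner_eq0.
apply: contrapT => no_lt; apply: nonunif => l.
have y_cst m : y m = y ord0.
  by case: (ltgtP (y m) (y ord0)) => // lt; case: no_lt; [exists m, ord0 | exists ord0, m].
move: y_sum; rewrite (eq_bigr _ (fun m _ => y_cst m)) sumr_const card_ord => y0.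
have nz : n.+1%:R != 0 :> R by rewrite pnatr_eq0.
by rewrite y_cst; apply: (mulIf nz); rewrite mulr_natr y0 mul1r mulVf.
Qed.

End Simplex.

Definition oddsq (R : realType) (q w : R) := w `^ q / (1 - w) `^ q.

(* The partial derivative dP/dy_l divided by q * prod_m (1 - y_m)^q, at a point
   where y_l = w and sum_m oddsq q (y_m) = S. *)
Definition partial_Pq (R : realType) (q S w : R) :=
  oddsq q w / w - (S - oddsq q w) / (1 - w).

Definition pair_value (R : realType) (q r x z t : R) :=
  (1 - (x + t)) `^ q * (1 - (z - t)) `^ q * (r + oddsq q (x + t) + oddsq q (z - t)).

Section Derivatives.
Variables (R : realType) (q : R).

Lemma is_derive_addl (c t : R) : is_derive t 1 (fun u : R => c + u) 1.
Proof.
have := is_deriveD (is_derive_cst c t 1) (is_derive_id t (1 : R)).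
by rewrite add0r.
Qed.

Lemma is_derive_subl (c t : R) : is_derive t 1 (fun u : R => c - u) (-1).
Proof.
have := is_deriveB (is_derive_cst c t 1) (is_derive_id t (1 : R)).
by rewrite sub0r.
Qed.

Lemma powR_subr1 (w : R) : 0 < w -> w `^ (q - 1) = w `^ q / w.
Proof.
by move=> w0; rewrite powRB ?powRr1 ?ltW //; apply/implyP => _; rewrite gt_eqF.
Qed.

Lemma is_derive_powR_1B (w : R) : w < 1 ->
  is_derive w 1 (fun v : R => (1 - v) `^ q) (- (q * (1 - w) `^ q / (1 - w))).
Proof.
move=> w1; have w1' : 0 < 1 - w by lra.
have := @is_derive1_comp R (fun v => v `^ q) (fun u => 1 - u) w _ _
  (is_derive1_powR q w1') (is_derive_subl 1 w).
by rewrite powR_subr1 // mulrN1 mulrA.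
Qed.

Lemma is_derive_oddsq (w : R) : 0 < w < 1 ->
  is_derive w 1 (oddsq q) (q * oddsq q w / (w * (1 - w))).
Proof.
move=> /andP [w0 w1]; have w1' : 0 < 1 - w by lra.
have F0 : (1 - w) `^ q != 0 by rewrite gt_eqF ?powR_gt0.
have D := is_deriveM (is_derive1_powR q w0)
  (@is_deriveV R (fun v => (1 - v) `^ q) w _ 1 F0 (is_derive_powR_1B w1)).
apply: (is_derive_eq D).
rewrite /oddsq powR_subr1 // /GRing.scale /= expr2.
by field; rewrite !gt_eqF ?powR_gt0.
Qed.

Lemma is_derive_pair_value (r x z t : R) : 0 < x + t < 1 -> 0 < z - t < 1 ->
  let S := r + oddsq q (x + t) + oddsq q (z - t) in
  is_derive t 1 (pair_value q r x z)
    (q * ((1 - (x + t)) `^ q * (1 - (z - t)) `^ q) *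
       (partial_Pq q S (x + t) - partial_Pq q S (z - t))).
Proof.
move=> a01 b01 S; have /andP [a0 a1] := a01; have /andP [b0 b1] := b01.
have dFa := @is_derive1_comp R (fun v => (1 - v) `^ q) (fun u => x + u) t _ _
  (is_derive_powR_1B a1) (is_derive_addl x t).
have dFb := @is_derive1_comp R (fun v => (1 - v) `^ q) (fun u => z - u) t _ _
  (is_derive_powR_1B b1) (is_derive_subl z t).
have dha := @is_derive1_comp R (oddsq q) (fun u => x + u) t _ _
  (is_derive_oddsq a01) (is_derive_addl x t).
have dhb := @is_derive1_comp R (oddsq q) (fun u => z - u) t _ _
  (is_derive_oddsq b01) (is_derive_subl z t).
have D := is_deriveM (is_deriveM dFa dFb)
  (is_deriveD (is_deriveD (is_derive_cst r t 1) dha) dhb).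
apply: (is_derive_eq D); rewrite /GRing.scale /= /partial_Pq /S.
have a1' : 0 < 1 - (x + t) by lra.
have b1' : 0 < 1 - (z - t) by lra.
by rewrite !fctE /=; field; rewrite !gt_eqF ?powR_gt0.
Qed.

Lemma partial_Pq_eq_of_max (r x z : R) :
  0 < q -> 0 < x -> 0 < z -> x + z <= 1 ->
  (forall t, - x < t < z -> pair_value q r x z t <= pair_value q r x z 0) ->
  let S := r + oddsq q x + oddsq q z in partial_Pq q S x = partial_Pq q S z.
Proof.
move=> q0 x0 z0 xz1 max0 S.
have inner t : - x < t < z -> 0 < x + t < 1 /\ 0 < z - t < 1.
  by move=> /andP [tx tz]; split; apply/andP; split; lra.
have max_at0 : is_derive (0 : R) 1 (pair_value q r x z) 0.
  apply: (@derive1_at_max _ _ (- x) z); first lra.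
  - move=> t; rewrite in_itv /= => /inner [ht1 ht2].
    by have := is_derive_pair_value r ht1 ht2; case.
  - by rewrite in_itv /=; apply/andP; split; lra.
  - by move=> t; rewrite in_itv /=; apply: max0.
have [h01 h02] : 0 < x + 0 < 1 /\ 0 < z - 0 < 1 by apply: inner; apply/andP; split; lra.
have nz : q * ((1 - x) `^ q * (1 - z) `^ q) != 0.
  by rewrite !mulf_neq0 // gt_eqF // powR_gt0 //; lra.
case: (is_derive_pair_value r h01 h02) => _; case: max_at0 => _ ->.
rewrite addr0 subr0 -/S => /eqP; rewrite eq_sym mulf_eq0 (negbTE nz) /= subr_eq0.
by move/eqP.
Qed.

End Derivatives.

Section Maximizer.
Variables (R : realType) (k : nat) (q : R).
Implicit Types (y : 'I_k -> R).

Lemma Pq_fun_factor y : (forall l, y l < 1) ->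
  Pq_fun q y = \prod_l (1 - y l) `^ q * \sum_l oddsq q (y l).
Proof.
move=> y_lt1; rewrite /Pq_fun mulr_sumr; apply: eq_bigr => l _.
rewrite [in RHS](bigD1 l) //= /oddsq.
have : 0 < (1 - y l) `^ q by apply: powR_gt0; have := y_lt1 l; lra.
by move=> F0; field; rewrite gt_eqF.
Qed.

Lemma Pq_fun_transfer y (i j : 'I_k) t : i != j ->
  (forall l, transfer y i j t l < 1) ->
  Pq_fun q (transfer y i j t) =
  \prod_(l | (l != i) && (l != j)) (1 - y l) `^ q *
  pair_value q (\sum_(l | (l != i) && (l != j)) oddsq q (y l)) (y i) (y j) t.
Proof.
move=> ij tr_lt1; rewrite Pq_fun_factor //.
rewrite (big_transfer y ij _ (fun w => (1 - w) `^ q)).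
rewrite (big_transfer y ij _ (oddsq q)) /pair_value /=; ring.
Qed.

Lemma maximizer_partial_Pq_eq y (i j : 'I_k) : 0 < q -> i != j ->
  in_simplex y -> (forall l, 0 < y l) ->
  (forall y', in_simplex y' -> Pq_fun q y' <= Pq_fun q y) ->
  let S := \sum_l oddsq q (y l) in partial_Pq q S (y i) = partial_Pq q S (y j).
Proof.
move=> q0 ij y_simplex y_pos y_max S.
have ij1 := simplex_pair_le1 ij y_simplex.
have y_lt1 := simplex_lt1 ij y_simplex y_pos.
set C := \prod_(l | (l != i) && (l != j)) (1 - y l) `^ q.
set r := \sum_(l | (l != i) && (l != j)) oddsq q (y l).
have C0 : 0 < C by apply: prodr_gt0 => l _; apply: powR_gt0; have := y_lt1 l; lra.
have tr_lt1 t : - y i < t < y j -> forall l, transfer y i j t l < 1.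
  move=> /andP [ti tj] l; rewrite /transfer.
  by case: ifP => _; [lra | case: ifP => _; [lra | exact: y_lt1]].
have -> : S = r + oddsq q (y i) + oddsq q (y j).
  by rewrite /S (bigD2 _ _ ij) /= addrC addrA.
apply: partial_Pq_eq_of_max => // t ht.
rewrite -(ler_pM2l C0) -Pq_fun_transfer //; last exact: tr_lt1 ht.
have ht0 : - y i < 0 < y j by have := y_pos i; have := y_pos j; lra.
rewrite -Pq_fun_transfer //; last exact: tr_lt1 ht0.
rewrite transfer0; apply: y_max; apply: simplex_transfer => //.
by move: ht => /andP [? ?]; apply/andP; split; lra.
Qed.

Lemma sum_weighted_partial_Pq y :
  (forall l, 0 < y l) -> (forall l, y l < 1) -> \sum_l y l = 1 ->
  let S := \sum_l oddsq q (y l) in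
  \sum_l y l * (1 - y l) * partial_Pq q S (y l) = 0.
Proof.
move=> y_pos y_lt1 y_sum S.
under eq_bigr => l _.
  have y0 := y_pos l; have y1 : 0 < 1 - y l by have := y_lt1 l; lra.
  have -> : y l * (1 - y l) * partial_Pq q S (y l) = oddsq q (y l) - y l * S.
    by rewrite /partial_Pq; field; rewrite !gt_eqF.
  over.
by rewrite sumrB -mulr_suml y_sum mul1r subrr.
Qed.

Lemma oddsq_div_eq_of_partial_Pq_eq0 (S w : R) : 0 < w -> w < 1 ->
  partial_Pq q S w = 0 -> oddsq q w / w = S.
Proof.
move=> w0 w1 /eqP; rewrite /partial_Pq subr_eq0 => /eqP E.
have w1' : 0 < 1 - w by lra.
set H := oddsq q w / w in E *.
have hw : oddsq q w = H * w by rewrite /H divfK ?gt_eqF.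
have : H * (1 - w) = S - H * w by rewrite {1}E divfK ?gt_eqF // hw.
lra.
Qed.

Lemma maximizer_oddsq_div_const y (i j : 'I_k) :
  0 < q -> i != j -> in_simplex y -> (forall l, 0 < y l) ->
  (forall y', in_simplex y' -> Pq_fun q y' <= Pq_fun q y) ->
  forall l, oddsq q (y l) / y l = \sum_m oddsq q (y m).
Proof.
move=> q0 ij y_simplex y_pos y_max.
have y_lt1 := simplex_lt1 ij y_simplex y_pos.
set S := \sum_m oddsq q (y m).
have partial_cst l : partial_Pq q S (y l) = partial_Pq q S (y i).
  case: (eqVneq l i) => [-> // | li].
  exact: maximizer_partial_Pq_eq q0 li y_simplex y_pos y_max.
have partial0 : partial_Pq q S (y i) = 0.
  have /= := sum_weighted_partial_Pq y_pos y_lt1 y_simplex.2.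
  rewrite -/S; under eq_bigr do rewrite partial_cst.
  rewrite -mulr_suml => /eqP; rewrite mulf_eq0 => /orP [/eqP weights0 | /eqP //].
  have w_ge0 l : true -> 0 <= y l * (1 - y l).
    by move=> _; apply: mulr_ge0; have := y_lt1 l; have := y_pos l; lra.
  move: (psumr_eq0P w_ge0 weights0 (i := i) isT).
  by have := y_lt1 i; have := y_pos i; nra.
by move=> l; apply: oddsq_div_eq_of_partial_Pq_eq0; rewrite ?partial_cst.
Qed.

End Maximizer.

Section LogSlope.
Variables (R : realType) (q : R).

Definition Gq (w : R) := (q - 1) * ln w - q * ln (1 - w).

Lemma oddsq_div_expR (w : R) : 0 < w -> w < 1 -> oddsq q w / w = expR (Gq w).
Proof.
move=> w0 w1; have w1' : 0 < 1 - w by lra.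
rewrite /oddsq /Gq /powR !gt_eqF // -[X in _ / X](lnK (w0 : w \is Num.pos)).
by rewrite -!expRN -!expRD; congr expR; ring.
Qed.

Lemma is_derive_Gq (w : R) : 0 < w -> w < 1 ->
  is_derive w 1 Gq ((w - (1 - q)) / (w * (1 - w))).
Proof.
move=> w0 w1; have w1' : 0 < 1 - w by lra.
have dln1B := @is_derive1_comp R (@ln R) (fun u => 1 - u) w _ _
  (is_derive1_ln w1') (is_derive_subl 1 w).
apply: is_derive_eq.
  exact: is_deriveB (is_deriveZ (q - 1) (is_derive1_ln w0)) (is_deriveZ q dln1B).
by rewrite /GRing.scale /=; field; rewrite !gt_eqF.
Qed.

Lemma derivable_Gq (w : R) : 0 < w -> w < 1 -> derivable Gq w 1.
Proof. by move=> w0 w1; case: (is_derive_Gq w0 w1). Qed.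

Lemma derive1_Gq (w : R) : 0 < w -> w < 1 ->
  derive1 Gq w = (w - (1 - q)) / (w * (1 - w)).
Proof. by move=> w0 w1; rewrite derive1E; case: (is_derive_Gq w0 w1). Qed.

Lemma Gq_decr (s t : R) : 0 < q -> 0 < s -> s < t -> t <= 1 - q -> Gq t < Gq s.
Proof.
move=> q0 s0 st tq; apply: (@ltr0_derive1_decr R Gq s t) => //.
- by move=> w; rewrite in_itv /= => /andP [? ?]; apply: derivable_Gq; lra.
- move=> w; rewrite in_itv /= => /andP [? ?].
  rewrite derive1_Gq; try lra.
  by rewrite ltr_pdivrMr ?mul0r; [lra | apply: mulr_gt0; lra].
- apply: derivable_within_continuous => w; rewrite in_itv /= => /andP [? ?].
  by apply: derivable_Gq; lra.
Qed.

Lemma Gq_incr (s t : R) : q < 1 -> 1 - q <= s -> s < t -> t < 1 -> Gq s < Gq t.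
Proof.
move=> q1 qs st t1; apply: (@gtr0_derive1_incr R Gq s t) => //.
- by move=> w; rewrite in_itv /= => /andP [? ?]; apply: derivable_Gq; lra.
- move=> w; rewrite in_itv /= => /andP [? ?].
  rewrite derive1_Gq; try lra.
  by rewrite ltr_pdivlMr ?mul0r; [lra | apply: mulr_gt0; lra].
- apply: derivable_within_continuous => w; rewrite in_itv /= => /andP [? ?].
  by apply: derivable_Gq; lra.
Qed.

Lemma Gq_eq_separated (s t : R) : 0 < q -> q < 1 ->
  0 < s -> s < t -> t < 1 -> Gq s = Gq t -> s < 1 - q < t.
Proof.
move=> q0 q1 s0 st t1 Gst; apply/andP; split; rewrite ltNge; apply/negP => h.
- by have := Gq_incr q1 h st t1; rewrite Gst ltxx.
- by have := Gq_decr q0 s0 st h; rewrite Gst ltxx.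
Qed.

End LogSlope.

Lemma exists_two_values (R : realType) (I : Type) (y : I -> R) (c : R) (l1 l2 : I) :
  (forall l m, y l < y m -> y l < c < y m) -> y l1 < y l2 ->
  exists a b : R,
    [/\ a < c, c < b, (forall l, y l = a \/ y l = b),
        (exists l, y l = a) & (exists l, y l = b)].
Proof.
move=> separated lt12; have /andP [ac cb] := separated _ _ lt12.
exists (y l1), (y l2); split => //; [| by exists l1 | by exists l2].
move=> l; case: (ltgtP (y l) (y l1)) => [lt1 | gt1 | ->]; last by left.
  by have := separated _ _ lt1; lra.
case: (ltgtP (y l) (y l2)) => [lt2 | gt2 | ->]; last by right.
- by have := separated _ _ lt2; have := separated _ _ gt1; lra.
- by have := separated _ _ gt2; lra.
Qed.

Theorem corollary4p3 (R : realType) (k : nat) (q : R) (ys : 'I_k -> R) :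
  (2 <= k)%N -> 1 / 2 < q -> q < 1 ->
  @in_simplex R k ys -> (forall i, 0 < ys i) ->
  (forall y : 'I_k -> R, @in_simplex R k y -> Pq_fun (k:=k) q y <= Pq_fun (k:=k) q ys) ->
  ~ (forall i, ys i = 1 / k%:R) ->
  exists a b : R,
    [/\ a < 1 - q, 1 - q < b,
        (forall i, ys i = a \/ ys i = b),
        (exists i, ys i = a) & (exists i, ys i = b)].
Proof.
move=> k2 q_gt_half q1 ys_simplex ys_pos ys_max nonuniform.
have q0 : 0 < q by lra.
pose i0 : 'I_k := Ordinal (leq_trans (isT : (0 < 2)%N) k2).
pose i1 : 'I_k := Ordinal k2.
have ys_lt1 := simplex_lt1 (isT : i0 != i1) ys_simplex ys_pos.
have stationary := maximizer_oddsq_div_const q0 (isT : i0 != i1) ys_simplex ys_pos ys_max.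
have [l1 [l2 lt12]] := exists_lt_of_nonuniform ys_simplex.2 nonuniform.
apply: (exists_two_values _ lt12) => l m lt_lm.
apply: (Gq_eq_separated q0 q1 (ys_pos l) lt_lm (ys_lt1 m)).
by apply: expR_inj; rewrite -!oddsq_div_expR ?stationary.
Qed.
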